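(* Let $H$, $\mathcal{R}$, $A$, $\mathcal{Q}$ be as in the context ($H$ factorisable). The formulas \[(h\otimes1)\triangleright a=\langle Sh,a_{(1)}\rangle a_{(2)}-1\langle Sh,a\rangle,\qquad (1\otimes g)\triangleright a=a_{(1)}\langle g,a_{(2)}\rangle-1\langle g,a\rangle,\qquad h,g\in H,\ a\in\ker\epsilon\subset A,\] define an action of the algebra $H\otimes H$ on $\ker\epsilon\subset A$, and its pull-back along the algebra isomorphism $\theta:H\bowtie A^{\rm op}\to H\otimes H$, \[\theta(h\otimes a)=h_{(1)}\mathcal{R}^{-(2)}\otimes h_{(2)}\mathcal{R}^{(1)}\,\langle\mathcal{R}^{-(1)}\mathcal{R}^{(2)},a\rangle,\] is the action of $H\bowtie A^{\rm op}$ on $\ker\epsilon\subset A$ given by $h\triangleright a=a_{(2)}\langle h,(Sa_{(1)})a_{(3)}\rangle$ and $b\triangleright a=\langle b,\mathcal{R}'^{(1)}\mathcal{R}^{(2)}\rangle\langle a_{(1)},\mathcal{R}'^{(2)}\rangle\langle a_{(3)},\mathcal{R}^{(1)}\rangle a_{(2)}-\langle b,\mathcal{Q}(a)\rangle1$.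
   Context: $H$ is a quasitriangular Hopf algebra over $\mathbb{C}$ with $\mathcal{R}=\mathcal{R}^{(1)}\otimes\mathcal{R}^{(2)}\in H\otimes H$ ($(\Delta\otimes{\rm id})\mathcal{R}=\mathcal{R}_{13}\mathcal{R}_{23}$, $({\rm id}\otimes\Delta)\mathcal{R}=\mathcal{R}_{13}\mathcal{R}_{12}$, $\Delta^{\rm op}=\mathcal{R}\Delta\mathcal{R}^{-1}$), $\mathcal{R}^{-1}=\mathcal{R}^{-(1)}\otimes\mathcal{R}^{-(2)}$, $\mathcal{R}'$ a second copy of $\mathcal{R}$. $A$ is a Hopf algebra non-degenerately paired with $H$ (Hopf pairing $\langle hg,a\rangle=\langle h,a_{(1)}\rangle\langle g,a_{(2)}\rangle$, $\langle h,ab\rangle=\langle h_{(1)},a\rangle\langle h_{(2)},b\rangle$). $\mathcal{Q}(a)=(a\otimes{\rm id})(\mathcal{R}_{21}\mathcal{R})$, and factorisable means $\mathcal{Q}:A\to H$ is bijective; in this case $\theta$ is an isomorphism of algebras onto $H\otimes H$ (tensor product algebra). The quantum double $H\bowtie A^{\rm op}$ is $H\otimes A$ with product $(h\otimes a)(g\otimes b)=hg_{(2)}\otimes ba_{(2)}\langle g_{(1)},a_{(1)}\rangle\langle g_{(3)},Sa_{(3)}\rangle$. *)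

(* Hopf-algebraic data encoded via Sweedler-style finite sums,
   with equality in tensor products tested against all multilinear forms. *)
From HB Require Import structures.
From mathcomp Require Import all_boot all_order all_algebra.
From mathcomp Require Import complex Rstruct.
Set Implicit Arguments. Unset Strict Implicit. Unset Printing Implicit Defensive.
Import GRing.Theory Num.Theory.
Local Open Scope ring_scope.

Definition CC : fieldType := complex Rdefinitions.R.

Section Tensors.
Variable K : fieldType.

(* An element of U (x) V is represented by a finite list of simple tensors
   sum_i u_i (x) v_i.  Two representatives are equal in U (x) V iff every
   K-bilinear form takes the same value on them (K a field). *)
Definition bilinear_form (U V : lmodType K) (f : U -> V -> K) : Prop :=
  (forall (a : K) u u' v, f (a *: u + u') v = a * f u v + f u' v) /\
  (forall (a : K) u v v', f u (a *: v + v') = a * f u v + f u v').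

Definition teq (U V : lmodType K) (t1 t2 : seq (U * V)) : Prop :=
  forall f : U -> V -> K, bilinear_form f ->
    \sum_(p <- t1) f p.1 p.2 = \sum_(p <- t2) f p.1 p.2.

Definition trilinear_form (U V W : lmodType K) (f : U -> V -> W -> K) : Prop :=
  (forall (a : K) u u' v w, f (a *: u + u') v w = a * f u v w + f u' v w) /\
  (forall (a : K) u v v' w, f u (a *: v + v') w = a * f u v w + f u v' w) /\
  (forall (a : K) u v w w', f u v (a *: w + w') = a * f u v w + f u v w').

Definition teq3 (U V W : lmodType K) (t1 t2 : seq (U * V * W)) : Prop :=
  forall f : U -> V -> W -> K, trilinear_form f ->
    \sum_(p <- t1) f p.1.1 p.1.2 p.2 = \sum_(p <- t2) f p.1.1 p.1.2 p.2.

Definition tmul (H : algType K) (t t' : seq (H * H)) : seq (H * H) :=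
  [seq (x.1 * y.1, x.2 * y.2) | x <- t, y <- t'].

Record is_hopf (H : algType K) (D : H -> seq (H * H)) (e : H -> K) (S : H -> H)
  : Prop := {
  hopf_D_lin : forall (a : K) h g,
    teq (D (a *: h + g)) ([seq (a *: p.1, p.2) | p <- D h] ++ D g);
  hopf_D_mul : forall h g, teq (D (h * g)) (tmul (D h) (D g));
  hopf_D_one : teq (D 1) [:: (1, 1)];
  hopf_coass : forall h,
    teq3 [seq (q.1, q.2, p.2) | p <- D h, q <- D p.1]
         [seq (p.1, q.1, q.2) | p <- D h, q <- D p.2];
  hopf_e_lin : forall (a : K) h g, e (a *: h + g) = a * e h + e g;
  hopf_e_mul : forall h g, e (h * g) = e h * e g;
  hopf_e_one : e 1 = 1;
  hopf_counitL : forall h, \sum_(p <- D h) e p.1 *: p.2 = h;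
  hopf_counitR : forall h, \sum_(p <- D h) e p.2 *: p.1 = h;
  hopf_S_lin : forall (a : K) h g, S (a *: h + g) = a *: S h + S g;
  hopf_antipodeL : forall h, \sum_(p <- D h) S p.1 * p.2 = e h *: 1;
  hopf_antipodeR : forall h, \sum_(p <- D h) p.1 * S p.2 = e h *: 1
}.

Record is_hopf_pairing (H A : algType K)
  (DH : H -> seq (H * H)) (eH : H -> K) (DA : A -> seq (A * A)) (eA : A -> K)
  (pr : H -> A -> K) : Prop := {
  pair_bilin : bilinear_form pr;
  pair_mulH : forall h g a, pr (h * g) a = \sum_(p <- DA a) pr h p.1 * pr g p.2;
  pair_mulA : forall h a b, pr h (a * b) = \sum_(p <- DH h) pr p.1 a * pr p.2 b;
  pair_oneH : forall a, pr 1 a = eA a;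
  pair_oneA : forall h, pr h 1 = eH h
}.

Definition pairing_nondegenerate (H A : algType K) (pr : H -> A -> K) : Prop :=
  (forall h, (forall a, pr h a = 0) -> h = 0) /\
  (forall a, (forall h, pr h a = 0) -> a = 0).

Record is_quasitriangular (H : algType K) (DH : H -> seq (H * H))
  (R Rinv : seq (H * H)) : Prop := {
  qt_inv_l : teq (tmul R Rinv) [:: (1, 1)];
  qt_inv_r : teq (tmul Rinv R) [:: (1, 1)];
  (* (Delta (x) id) R = R13 R23 *)
  qt_DL : teq3 [seq (q.1, q.2, r.2) | r <- R, q <- DH r.1]
               [seq (r.1, s.1, r.2 * s.2) | r <- R, s <- R];
  (* (id (x) Delta) R = R13 R12 *)
  qt_DR : teq3 [seq (r.1, q.1, q.2) | r <- R, q <- DH r.2]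
               [seq (r.1 * s.1, s.2, r.2) | r <- R, s <- R];
  (* Delta^op = R Delta R^{-1} *)
  qt_Dop : forall h, teq [seq (p.2, p.1) | p <- DH h]
     [seq (x.1.1 * x.2.1 * s.1, x.1.2 * x.2.2 * s.2)
        | x <- [seq (r, p) | r <- R, p <- DH h], s <- Rinv]
}.

Section Maps.
Variables (H A : algType K).
Variables (DH : H -> seq (H * H)) (SH : H -> H).
Variables (DA : A -> seq (A * A)) (SA : A -> A).
Variable pr : H -> A -> K.
Variables (R Rinv : seq (H * H)).

(* Q(a) = (a (x) id)(R21 R) *)
Definition Qmap (a : A) : H :=
  \sum_(p <- [seq (r.2 * s.1, r.1 * s.2) | r <- R, s <- R]) pr p.1 a *: p.2.

(* a_(1) (x) a_(2) (x) a_(3) *)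
Definition cop3 (a : A) : seq (A * A * A) :=
  [seq (q.1, q.2, p.2) | p <- DA a, q <- DA p.1].

Definition actL (h : H) (a : A) : A :=
  \sum_(p <- DA a) pr (SH h) p.1 *: p.2 - pr (SH h) a *: 1.

Definition actR (g : H) (a : A) : A :=
  \sum_(p <- DA a) pr g p.2 *: p.1 - pr g a *: 1.

Definition actHH (t : seq (H * H)) (a : A) : A :=
  \sum_(p <- t) actL p.1 (actR p.2 a).

(* theta_map(h (x) b) = h_(1) R^{-(2)} (x) h_(2) R^(1) <R^{-(1)} R^(2), b> *)
Definition theta_map (h : H) (b : A) : seq (H * H) :=
  [seq (pr (x.2.1 * s.2) b *: (x.1.1 * x.2.2), x.1.2 * s.1)
     | x <- [seq (p, r) | p <- DH h, r <- Rinv], s <- R].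

Definition hact (h : H) (a : A) : A :=
  \sum_(t <- cop3 a) pr h (SA t.1.1 * t.2) *: t.1.2.

(* b |> a = <b, R'^(1) R^(2)> <a_(1), R'^(2)> <a_(3), R^(1)> a_(2) - <b, Q(a)> 1 *)
Definition bact (b : A) (a : A) : A :=
  \sum_(r' <- R) \sum_(s <- R) \sum_(t <- cop3 a)
     (pr (r'.1 * s.2) b * pr r'.2 t.1.1 * pr s.1 t.2) *: t.1.2
  - pr (Qmap a) b *: 1.

End Maps.
End Tensors.

From Pilot Require Import Defs.
From HB Require Import structures.
From mathcomp Require Import all_boot all_order all_algebra.
From mathcomp Require Import complex Rstruct.
From mathcomp Require Import ring.
Import GRing.Theory Num.Theory.
Local Open Scope ring_scope.

Set Implicit Arguments. Unset Strict Implicit. Unset Printing Implicit Defensive.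

(* Everything is computed through the nondegenerate pairing: an element [x] of [A]
   is determined by the values [<k, x>], and the two actions are characterised by
     [<k, (h (x) g) |> a> = <S h k g, a> - <S h g, a> eps(k)].
   Hence [H (x) H] acts on [ker eps] because [S] is antimultiplicative with [S 1 = 1].
   For the pull-back along [theta], the [H]-part only needs
   [(id (x) eps) R = 1 = (eps (x) id) R^-1], while the [A^op]-part needs
   [(id (x) S) R^-1 = R], which comes from [(S (x) id) R = R^-1]; the general case
   expands both sides with the same sums. *)

Section Linearity.
Variable K : fieldType.

Section LinearFor.
Variables (U : lmodType K) (V : zmodType) (s : GRing.Scale.law K V).
Variables (f : U -> V) (fL : GRing.linear_for s f).

Lemma linear_for0 : f 0 = 0.
Proof. by rewrite -(subrr (0 : U)) (zmod_morphism_linear fL) subrr. Qed.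

Lemma linear_for_sum I (r : seq I) (F : I -> U) :
  f (\sum_(i <- r) F i) = \sum_(i <- r) f (F i).
Proof. exact: (big_morph f (GRing.semilinear_linear fL).2 linear_for0). Qed.

End LinearFor.

Lemma scalarZ_fun (U : lmodType K) (f : U -> K) : scalar f -> forall a x, f (a *: x) = a * f x.
Proof. exact: scalable_linear. Qed.

Lemma scalarB_fun (U : lmodType K) (f : U -> K) : scalar f -> forall x y, f (x - y) = f x - f y.
Proof. exact: zmod_morphism_linear. Qed.

Lemma scalar_sumZ (U : lmodType K) (f : U -> K) : scalar f ->
  forall I (r : seq I) (c : I -> K) (v : I -> U),
  f (\sum_(i <- r) c i *: v i) = \sum_(i <- r) c i * f (v i).
Proof.
by move=> fL I r c v; rewrite (linear_for_sum fL); apply: eq_bigr => i _; rewrite (scalarZ_fun fL).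
Qed.

Section Closure.
Variables (U W : lmodType K).
Implicit Types (f g : U -> K).

Lemma scalar_sum I (r : seq I) (F : I -> U -> K) :
  (forall i, scalar (F i)) -> scalar (fun x => \sum_(i <- r) F i x).
Proof. by move=> FL a x y; rewrite mulr_sumr -big_split; apply: eq_bigr => i _; exact: FL. Qed.

Lemma scalar_sub f g : scalar f -> scalar g -> scalar (fun x => f x - g x).
Proof. by move=> fL gL a x y; rewrite fL gL mulrBr opprD addrACA. Qed.

Lemma scalar_mull f k : scalar f -> scalar (fun x => k * f x).
Proof. by move=> fL a x y; rewrite fL mulrDr mulrCA. Qed.

Lemma scalar_mulr f k : scalar f -> scalar (fun x => f x * k).
Proof. by move=> fL a x y; rewrite fL mulrDl mulrA. Qed.

Lemma scalar_comp (f : W -> K) (g : U -> W) :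
  scalar f -> linear g -> scalar (fun x => f (g x)).
Proof. by move=> fL gL a x y; rewrite gL fL. Qed.

Lemma linear_id : linear (fun x : U => x).
Proof. by []. Qed.

Lemma linear_comp (V : lmodType K) (f : V -> W) (g : U -> V) :
  linear f -> linear g -> linear (fun x => f (g x)).
Proof. by move=> fL gL a x y; rewrite gL fL. Qed.

Lemma linear_mulr (B : algType K) (f : U -> B) k : linear f -> linear (fun x => f x * k).
Proof. by move=> fL a x y; rewrite fL mulrDl scalerAl. Qed.

Lemma linear_mull (B : algType K) (f : U -> B) k : linear f -> linear (fun x => k * f x).
Proof. by move=> fL a x y; rewrite fL mulrDr scalerAr. Qed.

End Closure.

Lemma bilinear_formP (U V : lmodType K) (f : U -> V -> K) :
  (forall v, scalar (f^~ v)) -> (forall u, scalar (f u)) -> bilinear_form f.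
Proof. by move=> fL1 fL2; split=> *; [apply: fL1 | apply: fL2]. Qed.

Lemma trilinear_formP (U V W : lmodType K) (f : U -> V -> W -> K) :
  (forall v w, scalar (fun u => f u v w)) -> (forall u w, scalar (fun v => f u v w)) ->
  (forall u v, scalar (f u v)) -> trilinear_form f.
Proof. by move=> fL1 fL2 fL3; split; [|split] => *; [apply: fL1|apply: fL2|apply: fL3]. Qed.

Lemma bilinear_form_scalarl (U V : lmodType K) (f : U -> V -> K) v :
  bilinear_form f -> scalar (f^~ v).
Proof. by case=> fL1 _ a x y; apply: fL1. Qed.

Lemma bilinear_form_scalarr (U V : lmodType K) (f : U -> V -> K) u :
  bilinear_form f -> scalar (f u).
Proof. by case=> _ fL2 a x y; apply: fL2. Qed.

Lemma trilinear_form_sum (U V W : lmodType K) I (r : seq I) (F : I -> U -> V -> W -> K) :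
  (forall i, trilinear_form (F i)) -> trilinear_form (fun u v w => \sum_(i <- r) F i u v w).
Proof.
move=> FL; apply: trilinear_formP => [v w|u w|u v] a x y; rewrite mulr_sumr -big_split;
  apply: eq_bigr => i _; case: (FL i) => [FL1 [FL2 FL3]]; [exact: FL1|exact: FL2|exact: FL3].
Qed.

Lemma bilinear_form_compl (U V X : lmodType K) (f : U -> V -> K) (g : X -> U) {v : V} :
  bilinear_form f -> linear g -> scalar (fun x => f (g x) v).
Proof. by case=> fL1 _ gL a x y; rewrite gL fL1. Qed.

Lemma bilinear_form_compr (U V X : lmodType K) (f : U -> V -> K) (g : X -> V) {u : U} :
  bilinear_form f -> linear g -> scalar (fun x => f u (g x)).
Proof. by case=> _ fL2 gL a x y; rewrite gL fL2. Qed.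

End Linearity.

Ltac linear_hyp := match goal with
  | fL : GRing.linear_for _ _ |- _ => first [apply: (scalar_comp fL) | apply: (linear_comp fL)]
  | fL : bilinear_form _ |- _ =>
      first [apply: (bilinear_form_compl fL) | apply: (bilinear_form_compr fL)]
  end.

Ltac solve_linear_with atoms := repeat first
  [ linear_hyp | atoms
  | apply: linear_id | apply: linear_mulr | apply: linear_mull
  | apply: scalar_sum => ?
  | apply: scalar_sub | apply: scalar_mull | apply: scalar_mulr ].

Section HopfAlgebra.
Variables (K : fieldType) (H : algType K).
Variables (D : H -> seq (H * H)) (e : H -> K) (S : H -> H).
Hypothesis hopfH : is_hopf D e S.

Lemma hopf_scalar_counit : scalar e.
Proof. exact: hopf_e_lin hopfH. Qed.

Lemma hopf_linear_antipode : linear S.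
Proof. exact: hopf_S_lin hopfH. Qed.

Lemma comul_coassoc_sum h (F : H -> H -> H -> K) : trilinear_form F ->
  \sum_(p <- D h) \sum_(q <- D p.1) F q.1 q.2 p.2 =
  \sum_(p <- D h) \sum_(q <- D p.2) F p.1 q.1 q.2.
Proof. by move=> FL; have := hopf_coass hopfH h FL; rewrite !big_allpairs_dep. Qed.

Lemma comulM_sum x y (f : H -> H -> K) : bilinear_form f ->
  \sum_(p <- D x) \sum_(q <- D y) f (p.1 * q.1) (p.2 * q.2) = \sum_(p <- D (x * y)) f p.1 p.2.
Proof. by move=> fL; rewrite (hopf_D_mul hopfH x y fL) /tmul big_allpairs_dep. Qed.

Lemma comul1_sum (f : H -> H -> K) : bilinear_form f -> \sum_(p <- D 1) f p.1 p.2 = f 1 1.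
Proof. by move=> fL; rewrite (hopf_D_one hopfH fL) big_seq1. Qed.

Lemma counit_suml (phi : H -> K) h : scalar phi -> \sum_(p <- D h) e p.1 * phi p.2 = phi h.
Proof.
by move=> phiL; rewrite -{2}(hopf_counitL hopfH h) (scalar_sumZ phiL).
Qed.

Lemma counit_sumr (phi : H -> K) h : scalar phi -> \sum_(p <- D h) e p.2 * phi p.1 = phi h.
Proof.
by move=> phiL; rewrite -{2}(hopf_counitR hopfH h) (scalar_sumZ phiL).
Qed.

Lemma counit_antipode h : e (S h) = e h.
Proof.
have := congr1 e (hopf_antipodeL hopfH h).
rewrite (linear_for_sum hopf_scalar_counit) (scalarZ_fun hopf_scalar_counit).
rewrite (hopf_e_one hopfH) mulr1 => <-.
rewrite -(@counit_sumr (fun u => e (S u)) h);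
  last exact: scalar_comp hopf_scalar_counit hopf_linear_antipode.
by apply: eq_bigr => p _; rewrite (hopf_e_mul hopfH) mulrC.
Qed.

End HopfAlgebra.

Section TwoHopfAlgebras.
Variables (K : fieldType) (H1 H2 : algType K).
Variables (D1 : H1 -> seq (H1 * H1)) (e1 : H1 -> K) (S1 : H1 -> H1).
Variables (D2 : H2 -> seq (H2 * H2)) (e2 : H2 -> K) (S2 : H2 -> H2).
Hypotheses (hopf1 : is_hopf D1 e1 S1) (hopf2 : is_hopf D2 e2 S2).

Lemma counit_sum2l (f : H1 -> H2 -> K) x y : bilinear_form f ->
  \sum_(p <- D1 x) \sum_(q <- D2 y) e1 p.1 * e2 q.1 * f p.2 q.2 = f x y.
Proof.
move=> fL; rewrite -(counit_suml hopf1 x (bilinear_form_scalarl y fL)).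
apply: eq_bigr => p _; rewrite -(counit_suml hopf2 y (bilinear_form_scalarr p.2 fL)).
by rewrite mulr_sumr; apply: eq_bigr => q _; rewrite mulrA.
Qed.

Lemma counit_sum2r (f : H1 -> H2 -> K) x y : bilinear_form f ->
  \sum_(p <- D1 x) \sum_(q <- D2 y) e1 p.2 * e2 q.2 * f p.1 q.1 = f x y.
Proof.
move=> fL; rewrite -(counit_sumr hopf1 x (bilinear_form_scalarl y fL)).
apply: eq_bigr => p _; rewrite -(counit_sumr hopf2 y (bilinear_form_scalarr p.1 fL)).
by rewrite mulr_sumr; apply: eq_bigr => q _; rewrite mulrA.
Qed.

Lemma comul_coassoc_sum2 x y (F : H1 -> H1 -> H1 -> H2 -> H2 -> H2 -> K) :
  (forall v1 v2 v3, trilinear_form (fun u1 u2 u3 => F u1 u2 u3 v1 v2 v3)) ->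
  (forall u1 u2 u3, trilinear_form (F u1 u2 u3)) ->
  \sum_(p <- D1 x) \sum_(q <- D2 y) \sum_(p' <- D1 p.1) \sum_(q' <- D2 q.1)
     F p'.1 p'.2 p.2 q'.1 q'.2 q.2 =
  \sum_(p <- D1 x) \sum_(q <- D2 y) \sum_(p' <- D1 p.2) \sum_(q' <- D2 q.2)
     F p.1 p'.1 p'.2 q.1 q'.1 q'.2.
Proof.
move=> FL1 FL2.
under eq_bigr => p _ do rewrite exchange_big.
rewrite (comul_coassoc_sum hopf1 x
  (F := fun u1 u2 u3 => \sum_(q <- D2 y) \sum_(q' <- D2 q.1) F u1 u2 u3 q'.1 q'.2 q.2));
  last by apply: trilinear_form_sum => q; apply: trilinear_form_sum => q'.
apply: eq_bigr => p _; rewrite [RHS]exchange_big; apply: eq_bigr => p' _.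
by rewrite (comul_coassoc_sum hopf2 y (FL2 p.1 p'.1 p'.2)).
Qed.

End TwoHopfAlgebras.

(* The axioms only determine tensors through multilinear forms, so identities in [H]
   are proved under an arbitrary linear form [phi] and separated later by the pairing. *)
Section Antipode.
Variables (K : fieldType) (H : algType K).
Variables (D : H -> seq (H * H)) (e : H -> K) (S : H -> H).
Hypothesis hopfH : is_hopf D e S.

Ltac solve_linear := solve_linear_with ltac:(apply: (linear_comp (hopf_linear_antipode hopfH))).

Lemma antipode_conv_mul_l (phi : H -> K) x y : scalar phi ->
  \sum_(p <- D x) \sum_(q <- D y) phi (S (p.1 * q.1) * (p.2 * q.2)) = e x * e y * phi 1.
Proof.
move=> phiL; rewrite (comulM_sum hopfH x y (f := fun u v => phi (S u * v)));
  last by apply: bilinear_formP => *; solve_linear.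
by rewrite -(linear_for_sum phiL) (hopf_antipodeL hopfH) (scalarZ_fun phiL) (hopf_e_mul hopfH).
Qed.

Lemma antipode_conv_mul_r (phi : H -> K) x y : scalar phi ->
  \sum_(p <- D x) \sum_(q <- D y) phi (p.1 * q.1 * (S q.2 * S p.2)) = e x * e y * phi 1.
Proof.
move=> phiL.
have inner u w : \sum_(q <- D y) phi (u * q.1 * (S q.2 * w)) = e y * phi (u * w).
  have psiL : scalar (fun z => phi (u * z * w)) by solve_linear.
  transitivity (\sum_(q <- D y) phi (u * (q.1 * S q.2) * w)).
    by apply: eq_bigr => q _; rewrite !mulrA.
  by rewrite -(linear_for_sum psiL) (hopf_antipodeR hopfH) -scalerAr -scalerAl
    (scalarZ_fun phiL) mulr1.
under eq_bigr => p _ do rewrite inner.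
by rewrite -mulr_sumr -(linear_for_sum phiL) (hopf_antipodeR hopfH) (scalarZ_fun phiL)
  mulrCA mulrA.
Qed.

(* [S (h g)] and [S g S h] are both convolution inverses of the multiplication of
   [H (x) H]. *)
Lemma form_antipodeM (phi : H -> K) h g : scalar phi -> phi (S (h * g)) = phi (S g * S h).
Proof.
move=> phiL; symmetry.
rewrite -(counit_sum2l hopfH hopfH h g (f := fun u v => phi (S v * S u)));
  last by apply: bilinear_formP => *; solve_linear.
transitivity (\sum_(p <- D h) \sum_(q <- D g) \sum_(p' <- D p.1) \sum_(q' <- D q.1)
  phi (S (p'.1 * q'.1) * (p'.2 * q'.2 * (S q.2 * S p.2)))).
  apply: eq_bigr => p _; apply: eq_bigr => q _.
  under eq_bigr => p' _ do under eq_bigr => q' _ do rewrite mulrA.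
  rewrite (antipode_conv_mul_l (phi := fun z => phi (z * (S q.2 * S p.2)))) ?mul1r //.
  by solve_linear.
rewrite (comul_coassoc_sum2 hopfH hopfH h g
  (F := fun u1 u2 u3 v1 v2 v3 => phi (S (u1 * v1) * (u2 * v2 * (S v3 * S u3)))));
  try by move=> *; apply: trilinear_formP => *; solve_linear.
transitivity (\sum_(p <- D h) \sum_(q <- D g) e p.2 * e q.2 * phi (S (p.1 * q.1))).
  apply: eq_bigr => p _; apply: eq_bigr => q _.
  rewrite (antipode_conv_mul_r (phi := fun z => phi (S (p.1 * q.1) * z))) ?mulr1 //.
  by solve_linear.
by rewrite (counit_sum2r hopfH hopfH h g (f := fun u v => phi (S (u * v))));
  last by apply: bilinear_formP => *; solve_linear.
Qed.

Lemma form_antipode1 (phi : H -> K) : scalar phi -> phi (S 1) = phi 1.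
Proof.
move=> phiL; have := congr1 phi (hopf_antipodeL hopfH 1).
rewrite (linear_for_sum phiL) (comul1_sum hopfH (f := fun u v => phi (S u * v))).
  by rewrite mulr1 (hopf_e_one hopfH) scale1r.
by apply: bilinear_formP => *; solve_linear.
Qed.

End Antipode.

Section Pairing.
Variables (K : fieldType) (H A : algType K).
Variables (DH : H -> seq (H * H)) (eH : H -> K) (SH : H -> H).
Variables (DA : A -> seq (A * A)) (eA : A -> K) (SA : A -> A).
Variable pr : H -> A -> K.
Hypotheses (hopfH : is_hopf DH eH SH) (hopfA : is_hopf DA eA SA).
Hypothesis hpair : is_hopf_pairing DH eH DA eA pr.

Lemma pair_scalarl a : scalar (pr^~ a).
Proof. exact: bilinear_form_scalarl (pair_bilin hpair). Qed.

Lemma pair_scalarr h : scalar (pr h).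
Proof. exact: bilinear_form_scalarr (pair_bilin hpair). Qed.

Ltac solve_linear := solve_linear_with ltac:(first
  [ apply: (scalar_comp (pair_scalarl _)) | apply: (scalar_comp (pair_scalarr _))
  | apply: (linear_comp (hopf_linear_antipode hopfH))
  | apply: (linear_comp (hopf_linear_antipode hopfA)) ]).

Lemma pair_antipode_convl x b :
  \sum_(q <- DH x) \sum_(u <- DA b) pr (SH q.1) u.1 * pr q.2 u.2 = eH x * eA b.
Proof.
under eq_bigr => q _ do rewrite -(pair_mulH hpair).
rewrite -(linear_for_sum (pair_scalarl b)) (hopf_antipodeL hopfH).
by rewrite (scalarZ_fun (pair_scalarl b)) (pair_oneH hpair).
Qed.

Lemma pair_antipode_convr x b :
  \sum_(q <- DH x) \sum_(u <- DA b) pr q.1 u.1 * pr q.2 (SA u.2) = eH x * eA b.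
Proof.
rewrite exchange_big; under eq_bigr => u _ do rewrite -(Defs.pair_mulA hpair).
rewrite -(linear_for_sum (pair_scalarr x)) (hopf_antipodeR hopfA).
by rewrite (scalarZ_fun (pair_scalarr x)) (pair_oneA hpair) mulrC.
Qed.

(* Both sides are convolution inverses of the pairing, viewed as a form on the
   coalgebra [H (x) A]. *)
Lemma pair_antipode h a : pr (SH h) a = pr h (SA a).
Proof.
rewrite -(counit_sum2r hopfH hopfA h a (f := fun u v => pr (SH u) v));
  last by apply: bilinear_formP => *; solve_linear.
transitivity (\sum_(p <- DH h) \sum_(t <- DA a) \sum_(q <- DH p.2) \sum_(u <- DA t.2)
  pr (SH p.1) t.1 * pr q.1 u.1 * pr q.2 (SA u.2)).
  apply: eq_bigr => p _; apply: eq_bigr => t _.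
  rewrite -(pair_antipode_convr p.2 t.2) mulr_suml; apply: eq_bigr => q _.
  by rewrite mulr_suml; apply: eq_bigr => u _; rewrite mulrC mulrA.
rewrite -(comul_coassoc_sum2 hopfH hopfA h a
  (F := fun u1 u2 u3 v1 v2 v3 => pr (SH u1) v1 * pr u2 v2 * pr u3 (SA v3)));
  try by move=> *; apply: trilinear_formP => *; solve_linear.
transitivity (\sum_(p <- DH h) \sum_(t <- DA a) eH p.1 * eA t.1 * pr p.2 (SA t.2)).
  apply: eq_bigr => p _; apply: eq_bigr => t _.
  rewrite -(pair_antipode_convl p.1 t.1) mulr_suml; apply: eq_bigr => q _.
  by rewrite mulr_suml.
by rewrite (counit_sum2l hopfH hopfA h a (f := fun u v => pr u (SA v)));
  last by apply: bilinear_formP => *; solve_linear.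
Qed.

Section Nondegenerate.
Hypothesis nondeg : pairing_nondegenerate pr.

Lemma pairing_eqH x y : (forall a, pr x a = pr y a) -> x = y.
Proof.
move=> exy; apply/eqP; rewrite -subr_eq0; apply/eqP; apply: nondeg.1 => a.
by rewrite (scalarB_fun (pair_scalarl a)) exy subrr.
Qed.

Lemma pairing_eqA x y : (forall h, pr h x = pr h y) -> x = y.
Proof.
move=> exy; apply/eqP; rewrite -subr_eq0; apply/eqP; apply: nondeg.2 => h.
by rewrite (scalarB_fun (pair_scalarr h)) exy subrr.
Qed.

Lemma antipode1 : SH 1 = 1.
Proof. apply: pairing_eqH => a; exact: (form_antipode1 hopfH (pair_scalarl a)). Qed.

Lemma antipodeM h g : SH (h * g) = SH g * SH h.
Proof. apply: pairing_eqH => a; exact: (form_antipodeM hopfH _ _ (pair_scalarl a)). Qed.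

End Nondegenerate.
End Pairing.

Section Quasitriangular.
Variables (K : fieldType) (H : algType K).
Variables (D : H -> seq (H * H)) (e : H -> K) (S : H -> H) (R Rinv : seq (H * H)).
Hypotheses (hopfH : is_hopf D e S) (qtri : is_quasitriangular D R Rinv).

Ltac solve_linear := solve_linear_with ltac:(first
  [ apply: (scalar_comp (hopf_scalar_counit hopfH))
  | apply: (linear_comp (hopf_linear_antipode hopfH)) ]).

Lemma sum_R_Rinv (f : H -> H -> K) : bilinear_form f ->
  \sum_(r <- R) \sum_(x <- Rinv) f (r.1 * x.1) (r.2 * x.2) = f 1 1.
Proof. by move=> fL; have := qt_inv_l qtri fL; rewrite /tmul big_allpairs_dep big_seq1. Qed.

Lemma sum_Rinv_R (f : H -> H -> K) : bilinear_form f ->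
  \sum_(x <- Rinv) \sum_(r <- R) f (x.1 * r.1) (x.2 * r.2) = f 1 1.
Proof. by move=> fL; have := qt_inv_r qtri fL; rewrite /tmul big_allpairs_dep big_seq1. Qed.

Lemma sum_comul_R1 (T : H -> H -> H -> K) : trilinear_form T ->
  \sum_(r <- R) \sum_(q <- D r.1) T q.1 q.2 r.2 =
  \sum_(r <- R) \sum_(s <- R) T r.1 s.1 (r.2 * s.2).
Proof. by move=> TL; have := qt_DL qtri TL; rewrite !big_allpairs_dep. Qed.

Lemma sum_comul_R2 (T : H -> H -> H -> K) : trilinear_form T ->
  \sum_(r <- R) \sum_(q <- D r.2) T r.1 q.1 q.2 =
  \sum_(r <- R) \sum_(s <- R) T (r.1 * s.1) s.2 r.2.
Proof. by move=> TL; have := qt_DR qtri TL; rewrite !big_allpairs_dep. Qed.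

(* Applying [eps] to the first leg of [(Delta (x) id) R = R13 R23] gives
   [R = (1 (x) u) R] with [u = (eps (x) id) R]; cancelling [R] leaves [u = 1]. *)
Lemma counit_R1 (phi : H -> K) : scalar phi -> \sum_(r <- R) e r.1 * phi r.2 = phi 1.
Proof.
move=> phiL; set u := \sum_(r <- R) e r.1 *: r.2.
have uR (f : H -> H -> K) : bilinear_form f ->
    \sum_(s <- R) f s.1 (u * s.2) = \sum_(s <- R) f s.1 s.2.
  move=> fL; have TL : trilinear_form (fun x y z => e x * f y z).
    by apply: trilinear_formP => *; solve_linear.
  have := sum_comul_R1 TL.
  under eq_bigr => r _ do rewrite (counit_suml hopfH r.1 (bilinear_form_scalarl r.2 fL)).
  move=> ->; rewrite [RHS]exchange_big; apply: eq_bigr => s _.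
  have gL : scalar (fun v => f s.1 (v * s.2)) by solve_linear.
  by rewrite (scalar_sumZ gL).
have fL : bilinear_form (fun p q => \sum_(x <- Rinv) e (p * x.1) * phi (q * x.2)).
  by apply: bilinear_formP => *; solve_linear.
have := uR _ fL; under eq_bigr do under eq_bigr do rewrite -mulrA.
rewrite (sum_R_Rinv (f := fun p q => e p * phi (u * q))); last first.
  by apply: bilinear_formP => *; solve_linear.
rewrite (sum_R_Rinv (f := fun p q => e p * phi q)); last first.
  by apply: bilinear_formP => *; solve_linear.
rewrite mulr1 (hopf_e_one hopfH) !mul1r => <-.
by rewrite (scalar_sumZ phiL).
Qed.

Lemma counit_R2 (phi : H -> K) : scalar phi -> \sum_(r <- R) e r.2 * phi r.1 = phi 1.
Proof.
move=> phiL; set u := \sum_(r <- R) e r.2 *: r.1.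
have Ru (f : H -> H -> K) : bilinear_form f ->
    \sum_(r <- R) f (r.1 * u) r.2 = \sum_(r <- R) f r.1 r.2.
  move=> fL; have TL : trilinear_form (fun x y z => e y * f x z).
    by apply: trilinear_formP => *; solve_linear.
  have := sum_comul_R2 TL.
  under eq_bigr => r _ do rewrite (counit_suml hopfH r.2 (bilinear_form_scalarr r.1 fL)).
  move=> ->; apply: eq_bigr => r _.
  have gL : scalar (fun v => f (r.1 * v) r.2) by solve_linear.
  by rewrite (scalar_sumZ gL).
have fL : bilinear_form (fun p q => \sum_(x <- Rinv) e (x.2 * q) * phi (x.1 * p)).
  by apply: bilinear_formP => *; solve_linear.
have := Ru _ fL; rewrite exchange_big [RHS in _ = RHS -> _]exchange_big.
under eq_bigr do under eq_bigr do rewrite mulrA.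
rewrite (sum_Rinv_R (f := fun p q => e q * phi (p * u))); last first.
  by apply: bilinear_formP => *; solve_linear.
rewrite (sum_Rinv_R (f := fun p q => e q * phi p)); last first.
  by apply: bilinear_formP => *; solve_linear.
rewrite mul1r (hopf_e_one hopfH) !mul1r => <-.
by rewrite (scalar_sumZ phiL).
Qed.

Lemma counit_Rinv1 (phi : H -> K) : scalar phi -> \sum_(x <- Rinv) e x.1 * phi x.2 = phi 1.
Proof.
move=> phiL.
transitivity (\sum_(x <- Rinv) e x.1 * \sum_(r <- R) e r.1 * phi (r.2 * x.2)).
  apply: eq_bigr => x _; rewrite (counit_R1 (phi := fun z => phi (z * x.2))) ?mul1r //.
  by solve_linear.
rewrite -[RHS]mul1r -(hopf_e_one hopfH) -(sum_R_Rinv (f := fun p q => e p * phi q)); last first.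
  by apply: bilinear_formP => *; solve_linear.
rewrite [RHS]exchange_big; apply: eq_bigr => x _; rewrite mulr_sumr; apply: eq_bigr => r _.
by rewrite (hopf_e_mul hopfH) mulrA [e x.1 * _]mulrC.
Qed.

Lemma R_antipode_inv (f : H -> H -> K) : bilinear_form f ->
  \sum_(r <- R) \sum_(s <- R) f (S r.1 * s.1) (r.2 * s.2) = f 1 1.
Proof.
move=> fL; rewrite -(sum_comul_R1 (T := fun u v w => f (S u * v) w)); last first.
  by apply: trilinear_formP => *; solve_linear.
transitivity (\sum_(r <- R) e r.1 * f 1 r.2); last exact: counit_R1 (bilinear_form_scalarr 1 fL).
apply: eq_bigr => r _; have fL1 := bilinear_form_scalarl r.2 fL.
by rewrite -(linear_for_sum fL1) (hopf_antipodeL hopfH) (scalarZ_fun fL1).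
Qed.

Lemma R_antipode_l (f : H -> H -> K) : bilinear_form f ->
  \sum_(r <- R) f (S r.1) r.2 = \sum_(x <- Rinv) f x.1 x.2.
Proof.
move=> fL.
transitivity (\sum_(r <- R) \sum_(s <- R) \sum_(x <- Rinv)
    f (S r.1 * (s.1 * x.1)) (r.2 * (s.2 * x.2))).
  apply: eq_bigr => r _.
  rewrite (sum_R_Rinv (f := fun p q => f (S r.1 * p) (r.2 * q))) ?mulr1 //.
  by apply: bilinear_formP => *; solve_linear.
under eq_bigr => r _ do rewrite exchange_big.
rewrite exchange_big; apply: eq_bigr => x _.
transitivity (\sum_(r <- R) \sum_(s <- R) f (S r.1 * s.1 * x.1) (r.2 * s.2 * x.2)).
  by apply: eq_bigr => r _; apply: eq_bigr => s _; rewrite !mulrA.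
rewrite (R_antipode_inv (f := fun p q => f (p * x.1) (q * x.2))) ?mul1r //.
by apply: bilinear_formP => *; solve_linear.
Qed.

Lemma Rinv_antipode_inv (f : H -> H -> K) : bilinear_form f ->
  \sum_(x <- Rinv) \sum_(y <- Rinv) f (x.1 * y.1) (x.2 * S y.2) = f 1 1.
Proof.
move=> fL.
transitivity (\sum_(x <- Rinv) \sum_(r <- R) f (x.1 * S r.1) (x.2 * S r.2)).
  apply: eq_bigr => x _; rewrite (R_antipode_l (f := fun u v => f (x.1 * u) (x.2 * S v))) //.
  by apply: bilinear_formP => *; solve_linear.
rewrite -(R_antipode_l (f := fun u v => \sum_(r <- R) f (u * S r.1) (v * S r.2))); last first.
  by apply: bilinear_formP => *; solve_linear.
transitivity (\sum_(r <- R) \sum_(s <- R) f (S (r.1 * s.1)) (s.2 * S r.2)).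
  rewrite exchange_big; apply: eq_bigr => r _; apply: eq_bigr => s _.
  by symmetry; exact: (form_antipodeM hopfH _ _ (bilinear_form_scalarl (s.2 * S r.2) fL)).
rewrite -(sum_comul_R2 (T := fun u v w => f (S u) (v * S w))); last first.
  by apply: trilinear_formP => *; solve_linear.
transitivity (\sum_(r <- R) e r.2 * f (S r.1) 1).
  apply: eq_bigr => r _; have fL2 := bilinear_form_scalarr (S r.1) fL.
  by rewrite -(linear_for_sum fL2) (hopf_antipodeR hopfH) (scalarZ_fun fL2).
rewrite (counit_R2 (phi := fun z => f (S z) 1)); last by solve_linear.
exact: (form_antipode1 hopfH (bilinear_form_scalarl 1 fL)).
Qed.

Lemma Rinv_antipode_r (f : H -> H -> K) : bilinear_form f ->
  \sum_(x <- Rinv) f x.1 (S x.2) = \sum_(r <- R) f r.1 r.2.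
Proof.
move=> fL.
transitivity (\sum_(x <- Rinv) \sum_(r <- R) \sum_(y <- Rinv)
    f (r.1 * y.1 * x.1) (r.2 * y.2 * S x.2)).
  apply: eq_bigr => x _.
  rewrite (sum_R_Rinv (f := fun p q => f (p * x.1) (q * S x.2))) ?mul1r //.
  by apply: bilinear_formP => *; solve_linear.
rewrite exchange_big; apply: eq_bigr => r _.
transitivity (\sum_(y <- Rinv) \sum_(x <- Rinv) f (r.1 * (y.1 * x.1)) (r.2 * (y.2 * S x.2))).
  by rewrite exchange_big; apply: eq_bigr => y _; apply: eq_bigr => x _; rewrite !mulrA.
rewrite (Rinv_antipode_inv (f := fun p q => f (r.1 * p) (r.2 * q))) ?mulr1 //.
by apply: bilinear_formP => *; solve_linear.
Qed.

End Quasitriangular.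

Section Actions.
Variables (K : fieldType) (H A : algType K).
Variables (DH : H -> seq (H * H)) (eH : H -> K) (SH : H -> H).
Variables (DA : A -> seq (A * A)) (eA : A -> K) (SA : A -> A).
Variables (pr : H -> A -> K) (R Rinv : seq (H * H)).
Hypotheses (hopfH : is_hopf DH eH SH) (hopfA : is_hopf DA eA SA).
Hypotheses (hpair : is_hopf_pairing DH eH DA eA pr) (nondeg : pairing_nondegenerate pr).
Hypothesis qtri : is_quasitriangular DH R Rinv.

Local Notation aL := (actL SH DA pr).
Local Notation aR := (actR DA pr).
Local Notation theta := (theta_map DH pr R Rinv).

Let prA := pair_scalarr hpair.
Let prH := pair_scalarl hpair.
Let eH_mul := hopf_e_mul hopfH.
Let eH1 := hopf_e_one hopfH.
Let eqA := pairing_eqA hpair nondeg.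
Let SH1 := antipode1 hopfH hpair nondeg.
Let SHM := antipodeM hopfH hpair nondeg.
Let prS := pair_antipode hopfH hopfA hpair.

Ltac solve_linear := solve_linear_with ltac:(first
  [ apply: (scalar_comp (prH _)) | apply: (scalar_comp (prA _))
  | apply: (scalar_comp (hopf_scalar_counit hopfH))
  | apply: (linear_comp (hopf_linear_antipode hopfH)) ]).

Lemma pair_actL k h a : pr k (aL h a) = pr (SH h * k) a - pr (SH h) a * eH k.
Proof.
by rewrite (scalarB_fun (prA k)) (scalar_sumZ (prA k)) (scalarZ_fun (prA k))
  (pair_oneA hpair) (pair_mulH hpair).
Qed.

Lemma pair_actR k g a : pr k (aR g a) = pr (k * g) a - pr g a * eH k.
Proof.
rewrite (scalarB_fun (prA k)) (scalar_sumZ (prA k)) (scalarZ_fun (prA k)).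
rewrite (pair_oneA hpair) (pair_mulH hpair).
by congr (_ - _); apply: eq_bigr => p _; rewrite mulrC.
Qed.

Lemma pair_actLR k h g a :
  pr k (aL h (aR g a)) = pr (SH h * k * g) a - pr (SH h * g) a * eH k.
Proof. by rewrite pair_actL !pair_actR eH_mul; ring. Qed.

Lemma pair_actLR_bilinear k a : bilinear_form (fun u v => pr k (aL u (aR v a))).
Proof.
have [L1 L2] : bilinear_form (fun u v => pr (SH u * k * v) a - pr (SH u * v) a * eH k).
  by apply: bilinear_formP => *; solve_linear.
by split=> *; rewrite !pair_actLR; [apply: L1 | apply: L2].
Qed.

Lemma eA_actL h a : eA (aL h a) = 0.
Proof. by rewrite -(pair_oneH hpair) pair_actL mulr1 eH1 mulr1 subrr. Qed.

Lemma eA_actR g a : eA (aR g a) = 0.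
Proof. by rewrite -(pair_oneH hpair) pair_actR mul1r eH1 mulr1 subrr. Qed.

Lemma actL_linearH c h h' a : aL (c *: h + h') a = c *: aL h a + aL h' a.
Proof.
apply: eqA => k; rewrite (prA k) !pair_actL (hopf_S_lin hopfH) mulrDl -scalerAl.
by rewrite !(prH a); ring.
Qed.

Lemma actR_linearH c g g' a : aR (c *: g + g') a = c *: aR g a + aR g' a.
Proof.
by apply: eqA => k; rewrite (prA k) !pair_actR mulrDr -scalerAr !(prH a); ring.
Qed.

Lemma actL_linearA c h a a' : aL h (c *: a + a') = c *: aL h a + aL h a'.
Proof. by apply: eqA => k; rewrite (prA k) !pair_actL !(prA _); ring. Qed.

Lemma actR_linearA c g a a' : aR g (c *: a + a') = c *: aR g a + aR g a'.
Proof. by apply: eqA => k; rewrite (prA k) !pair_actR !(prA _); ring. Qed.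

Lemma actL1 a : eA a = 0 -> aL 1 a = a.
Proof.
by move=> a0; apply: eqA => k; rewrite pair_actL SH1 mul1r (pair_oneH hpair) a0 mul0r subr0.
Qed.

Lemma actR1 a : eA a = 0 -> aR 1 a = a.
Proof.
by move=> a0; apply: eqA => k; rewrite pair_actR mulr1 (pair_oneH hpair) a0 mul0r subr0.
Qed.

Lemma actLM h h' a : aL (h * h') a = aL h (aL h' a).
Proof. by apply: eqA => k; rewrite !pair_actL SHM eH_mul !mulrA; ring. Qed.

Lemma actRM g g' a : aR (g * g') a = aR g (aR g' a).
Proof. by apply: eqA => k; rewrite !pair_actR eH_mul !mulrA; ring. Qed.

Lemma actLR_comm h g a : aL h (aR g a) = aR g (aL h a).
Proof. by apply: eqA => k; rewrite pair_actLR pair_actR !pair_actL eH_mul !mulrA; ring. Qed.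

Lemma pair_actHH k t a : pr k (actHH SH DA pr t a) = \sum_(q <- t) pr k (aL q.1 (aR q.2 a)).
Proof. by rewrite /actHH (linear_for_sum (prA k)). Qed.

Lemma eA_actHH t a : eA (actHH SH DA pr t a) = 0.
Proof.
rewrite -(pair_oneH hpair) pair_actHH big1 // => q _.
by rewrite pair_actLR mulr1 eH1 mulr1 subrr.
Qed.

Lemma theta_map_sum (f : H -> H -> K) h b : bilinear_form f ->
  \sum_(q <- theta h b) f q.1 q.2 =
  \sum_(p <- DH h) \sum_(x <- Rinv) \sum_(s <- R) pr (x.1 * s.2) b * f (p.1 * x.2) (p.2 * s.1).
Proof.
move=> fL; rewrite /theta_map big_allpairs_dep big_allpairs.
apply: eq_bigr => p _; apply: eq_bigr => x _; apply: eq_bigr => s _.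
exact: scalarZ_fun (bilinear_form_scalarl _ fL) _ _.
Qed.

Lemma pair_actHH_theta_h k h a :
  pr k (actHH SH DA pr (theta h 1) a) = \sum_(p <- DH h) pr k (aL p.1 (aR p.2 a)).
Proof.
have PhiL := pair_actLR_bilinear k a.
rewrite pair_actHH (theta_map_sum _ _ PhiL); apply: eq_bigr => p _.
transitivity (\sum_(x <- Rinv) eH x.1 *
    \sum_(s <- R) eH s.2 * pr k (aL (p.1 * x.2) (aR (p.2 * s.1) a))).
  apply: eq_bigr => x _; rewrite mulr_sumr; apply: eq_bigr => s _.
  by rewrite (pair_oneA hpair) eH_mul mulrA.
transitivity (\sum_(x <- Rinv) eH x.1 * pr k (aL (p.1 * x.2) (aR p.2 a))).
  apply: eq_bigr => x _; congr (_ * _).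
  by rewrite (counit_R2 hopfH qtri (phi := fun v => pr k (aL (p.1 * x.2) (aR (p.2 * v) a))))
    ?mulr1 //; solve_linear.
by rewrite (counit_Rinv1 hopfH qtri (phi := fun v => pr k (aL (p.1 * v) (aR p.2 a)))) ?mulr1 //;
  solve_linear.
Qed.

Lemma pair_hact k h c : pr k (hact DA SA pr h c) = \sum_(p <- DH h) pr (SH p.1 * k * p.2) c.
Proof.
rewrite (linear_for_sum (prA k)) /cop3 big_allpairs_dep /=.
transitivity (\sum_(p <- DA c) \sum_(q <- DA p.1) \sum_(r <- DH h)
    pr (SH r.1) q.1 * pr k q.2 * pr r.2 p.2).
  apply: eq_bigr => p _; apply: eq_bigr => q _.
  rewrite (scalarZ_fun (prA k)) (Defs.pair_mulA hpair) mulr_suml; apply: eq_bigr => r _.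
  by rewrite prS; ring.
symmetry; transitivity (\sum_(r <- DH h) \sum_(p <- DA c) \sum_(q <- DA p.1)
    pr (SH r.1) q.1 * pr k q.2 * pr r.2 p.2).
  apply: eq_bigr => r _; rewrite (pair_mulH hpair); apply: eq_bigr => p _.
  by rewrite (pair_mulH hpair) mulr_suml.
by rewrite exchange_big; apply: eq_bigr => p _; rewrite exchange_big.
Qed.

Lemma pair_actHH_theta_h_hact k h c :
  pr k (actHH SH DA pr (theta h 1) c) = pr k (hact DA SA pr h c) - eH h * eA c * eH k.
Proof.
rewrite pair_actHH_theta_h pair_hact; under eq_bigr do rewrite pair_actLR.
rewrite sumrB; congr (_ - _).
rewrite -mulr_suml -(linear_for_sum (prH c)) (hopf_antipodeL hopfH) (scalarZ_fun (prH c)).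
by rewrite (pair_oneH hpair).
Qed.

Lemma actHH_theta_h h a : eA a = 0 -> actHH SH DA pr (theta h 1) a = hact DA SA pr h a.
Proof.
by move=> a0; apply: eqA => k; rewrite pair_actHH_theta_h_hact a0 mulr0 mul0r subr0.
Qed.

Lemma pair_actHH_theta_b k b a : pr k (actHH SH DA pr (theta 1 b) a) =
  \sum_(x <- Rinv) \sum_(s <- R) pr (x.1 * s.2) b * pr k (aL x.2 (aR s.1 a)).
Proof.
have PhiL := pair_actLR_bilinear k a.
rewrite pair_actHH (theta_map_sum _ _ PhiL) (comul1_sum hopfH (f := fun u v =>
  \sum_(x <- Rinv) \sum_(s <- R) pr (x.1 * s.2) b * pr k (aL (u * x.2) (aR (v * s.1) a)))).
  by apply: eq_bigr => x _; apply: eq_bigr => s _; rewrite !mul1r.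
by apply: bilinear_formP => *; solve_linear.
Qed.

Lemma pair_Qmap a b : pr (Qmap pr R a) b =
  \sum_(x <- Rinv) \sum_(s <- R) pr (x.1 * s.2) b * pr (SH x.2 * s.1) a.
Proof.
rewrite (Rinv_antipode_r hopfH qtri
  (f := fun u v => \sum_(s <- R) pr (u * s.2) b * pr (v * s.1) a)); last first.
  by apply: bilinear_formP => *; solve_linear.
rewrite /Qmap big_allpairs_dep (linear_for_sum (prH b)); apply: eq_bigr => r _.
rewrite (linear_for_sum (prH b)); apply: eq_bigr => s _.
by rewrite (scalarZ_fun (prH b)) mulrC.
Qed.

Lemma pair_bact k b a : pr k (bact DA pr R b a) =
  \sum_(x <- Rinv) \sum_(s <- R) pr (x.1 * s.2) b * pr k (aL x.2 (aR s.1 a)).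
Proof.
rewrite /bact (scalarB_fun (prA k)) (scalarZ_fun (prA k)) (pair_oneA hpair) pair_Qmap.
transitivity (\sum_(x <- Rinv) \sum_(s <- R) pr (x.1 * s.2) b * pr (SH x.2 * k * s.1) a -
   (\sum_(x <- Rinv) \sum_(s <- R) pr (x.1 * s.2) b * pr (SH x.2 * s.1) a) * eH k); last first.
  rewrite mulr_suml -sumrB; apply: eq_bigr => x _.
  by rewrite mulr_suml -sumrB; apply: eq_bigr => s _; rewrite pair_actLR; ring.
congr (_ - _).
rewrite (Rinv_antipode_r hopfH qtri
  (f := fun u v => \sum_(s <- R) pr (u * s.2) b * pr (v * k * s.1) a)); last first.
  by apply: bilinear_formP => *; solve_linear.
rewrite (linear_for_sum (prA k)); apply: eq_bigr => r _.
rewrite (linear_for_sum (prA k)); apply: eq_bigr => s _.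
rewrite (linear_for_sum (prA k)) /cop3 big_allpairs_dep (pair_mulH hpair (r.2 * k) s.1 a).
rewrite mulr_sumr; apply: eq_bigr => p _.
rewrite (pair_mulH hpair r.2 k p.1) mulr_suml mulr_sumr; apply: eq_bigr => q _.
by rewrite (scalarZ_fun (prA k)) /=; ring.
Qed.

Lemma actHH_theta_b b a : actHH SH DA pr (theta 1 b) a = bact DA pr R b a.
Proof. by apply: eqA => k; rewrite pair_actHH_theta_b pair_bact. Qed.

Lemma actHH_theta h b a : actHH SH DA pr (theta h b) a = hact DA SA pr h (bact DA pr R b a).
Proof.
apply: eqA => k; set c := bact DA pr R b a.
have c0 : eA c = 0 by rewrite /c -actHH_theta_b eA_actHH.
rewrite -(actHH_theta_h h c0) pair_actHH_theta_h pair_actHH.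
rewrite (theta_map_sum _ _ (pair_actLR_bilinear k a)); apply: eq_bigr => p _.
rewrite pair_actLR /c !pair_bact mulr_suml -sumrB; apply: eq_bigr => x _.
rewrite mulr_suml -sumrB; apply: eq_bigr => s _.
by rewrite !pair_actLR SHM !eH_mul !(counit_antipode hopfH) !mulrA; ring.
Qed.

End Actions.

Theorem proposition4p2
  (H A : algType CC)
  (DH : H -> seq (H * H)) (eH : H -> CC) (SH : H -> H)
  (DA : A -> seq (A * A)) (eA : A -> CC) (SA : A -> A)
  (pr : H -> A -> CC) (R Rinv : seq (H * H))
  (hopfH : is_hopf DH eH SH) (hopfA : is_hopf DA eA SA)
  (hpair : is_hopf_pairing DH eH DA eA pr) (nondeg : pairing_nondegenerate pr)
  (qtri : is_quasitriangular DH R Rinv)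
  (factorisable : bijective (Qmap pr R)) :
  let aL := actL SH DA pr in
  let aR := actR DA pr in
  (forall h a, eA a = 0 -> eA (aL h a) = 0) /\
  (forall g a, eA a = 0 -> eA (aR g a) = 0) /\
  (forall (c : CC) h h' a, eA a = 0 -> aL (c *: h + h') a = c *: aL h a + aL h' a) /\
  (forall (c : CC) g g' a, eA a = 0 -> aR (c *: g + g') a = c *: aR g a + aR g' a) /\
  (forall (c : CC) h a a', eA a = 0 -> eA a' = 0 ->
     aL h (c *: a + a') = c *: aL h a + aL h a') /\
  (forall (c : CC) g a a', eA a = 0 -> eA a' = 0 ->
     aR g (c *: a + a') = c *: aR g a + aR g a') /\
  (forall a, eA a = 0 -> aL 1 a = a) /\
  (forall a, eA a = 0 -> aR 1 a = a) /\
  (forall h h' a, eA a = 0 -> aL (h * h') a = aL h (aL h' a)) /\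
  (forall g g' a, eA a = 0 -> aR (g * g') a = aR g (aR g' a)) /\
  (forall h g a, eA a = 0 -> aL h (aR g a) = aR g (aL h a)) /\
  (forall h a, eA a = 0 ->
     actHH SH DA pr (theta_map DH pr R Rinv h 1) a = hact DA SA pr h a) /\
  (forall b a, eA a = 0 ->
     actHH SH DA pr (theta_map DH pr R Rinv 1 b) a = bact DA pr R b a) /\
  (forall h b a, eA a = 0 ->
     actHH SH DA pr (theta_map DH pr R Rinv h b) a
       = hact DA SA pr h (bact DA pr R b a)).
Proof.
move=> aL aR.
split; first by move=> h a _; exact: (eA_actL hopfH hpair).
split; first by move=> g a _; exact: (eA_actR hopfH hpair).
split; first by move=> c h h' a _; exact: (actL_linearH hopfH hpair nondeg).
split; first by move=> c g g' a _; exact: (actR_linearH hpair nondeg).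
split; first by move=> c h a a' _ _; exact: (actL_linearA SH hpair nondeg).
split; first by move=> c g a a' _ _; exact: (actR_linearA hpair nondeg).
split; first by move=> a; exact: (actL1 hopfH hpair nondeg).
split; first by move=> a; exact: (actR1 hpair nondeg).
split; first by move=> h h' a _; exact: (actLM hopfH hpair nondeg).
split; first by move=> g g' a _; exact: (actRM hopfH hpair nondeg).
split; first by move=> h g a _; exact: (actLR_comm hopfH hpair nondeg).
split; first by move=> h a; exact: (actHH_theta_h hopfH hopfA hpair nondeg qtri).
split; first by move=> b a _; exact: (actHH_theta_b hopfH hpair nondeg qtri).
by move=> h b a _; exact: (actHH_theta hopfH hopfA hpair nondeg qtri).
Qed.
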